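(* Let $\widehat{\mathcal{G}}$ be a simple directed graph on $N$ vertices with adjacency matrix $A=A(\widehat{\mathcal{G}})\in\mathbb{R}^{N\times N}$, where $A_{ij}=1$ if there is an edge from $j$ to $i$ and $A_{ij}=0$ otherwise, and with vertices ordered so that the zero columns of $A$ (corresponding to the sinks) are the last columns. Let $\Pi_0=\{\mathcal{T}^{(0)}_1,\dots,\mathcal{T}^{(0)}_{|\Pi_0|}\}$, $|\Pi_0|=N-|\mathcal{S}_{\mathrm{in}}(\widehat{\mathcal{G}})|$, where $\mathcal{T}^{(0)}_k$ is the pseudotree consisting of vertex $k$, all out-neighbors of $k$, and all edges from $k$ to its out-neighbors. For $i,j\in\{1,\dots,|\Pi_0|\}$ let $$a_{ij}=\big([A+I\mathfrak{i}]_{\star i}\big)^\top[A+I\mathfrak{i}]_{\star j},$$ where $\mathfrak{i}$ is the imaginary unit and $[\,\cdot\,]_{\star i}$ denotes the $i$-th column (plain transpose, no conjugation). Then the characteristic matrix $\mathscr{M}^{(0)}$ of $\Pi_0$ satisfies $\mathscr{M}^{(0)}_{ii}=0$ for all $i$, and for $j\ne i$: $\mathscr{M}^{(0)}_{ij}=1$ if $\operatorname{Re}(a_{ij})=0$, $\operatorname{Im}(a_{ij})\ne0$ and $A_{ij}\ne0$; $\mathscr{M}^{(0)}_{ij}=0$ if $\operatorname{Re}(a_{ij})\ne0$, or if ($\operatorname{Re}(a_{ij})=0$, $\operatorname{Im}(a_{ij})\ne0$ and $A_{ij}=0$); $\mathscr{M}^{(0)}_{ij}=\varnothing$ if $a_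{ij}=0$.
   Context: $\mathcal{S}_{\mathrm{in}}(\widehat{\mathcal{G}})$ is the set of sinks (vertices with no out-neighbors). A pseudotree is a connected (underlying undirected graph connected) simple directed graph $\mathcal{T}$ with $|V(\mathcal{T})|\ge2$ in which every vertex has at most one in-neighbor in $\mathcal{T}$; a root of $\mathcal{T}$ is a vertex from which there is exactly one directed path to every other vertex of $\mathcal{T}$, and $\Upsilon(\mathcal{T})$ is the set of roots. Two pseudotree subgraphs $\mathcal{T}_1,\mathcal{T}_2$ are disjoint if $E(\mathcal{T}_1)\cap E(\mathcal{T}_2)=\emptyset$ and for every vertex $j\in V(\mathcal{T}_1)\cup V(\mathcal{T}_2)$ the edges of $E(\mathcal{T}_1)\cup E(\mathcal{T}_2)$ leaving $j$ all lie in one of $E(\mathcal{T}_1)$, $E(\mathcal{T}_2)$. Mergeability: for two disjoint pseudotrees $\mathcal{T}_1,\mathcal{T}_2$ with $V(\mathcal{T}_1)\cap V(\mathcal{T}_2)\ne\emptyset$, $\mathcal{T}_1$ is mergeable to $\mathcal{T}_2$ if the union graph $(V(\mathcal{T}_1)\cup V(\mathcal{T}_2),E(\mathcal{T}_1)\cup E(\mathcal{T}_2))$ is a pseudotree and there is a directed path from every vertex of $\Upsilon(\mathcal{T}_2)$ to every vertex of $V(\mathcal{T}_1)$. Characteristic matrix: for a disjoint pseudotree covering $\Pi=\{\mathcal{T}_1,\dots,\mathcal{T}_n\}$ of a directed graph, its characteristic matrix $\mathscr{M}\in\{1,0,\varnothing\}^{n\times n}$ has $\mathscr{M}_{ij}=1$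 if $\mathcal{T}_i$ is mergeable to $\mathcal{T}_j$, $\mathscr{M}_{ij}=\varnothing$ (a formal symbol) if $V(\mathcal{T}_j)\cap V(\mathcal{T}_i)=\emptyset$, and $\mathscr{M}_{ij}=0$ otherwise. *)

From Stdlib Require Import ClassicalEpsilon.
From mathcomp Require Import all_boot all_order all_algebra all_field.
Set Implicit Arguments. Unset Strict Implicit. Unset Printing Implicit Defensive.
Import GRing.Theory Num.Theory.

(* Vertices of the graph are 'I_N; [e u v] means there is an edge u -> v. *)

Record subgraph (N : nat) := Subgraph {
  sv : {set 'I_N};
  se : {set 'I_N * 'I_N} }.

Definition sink N (e : rel 'I_N) (k : 'I_N) : bool := [forall u, ~~ e k u].

(* a directed path (no repeated vertices) from u to v using edges in E,
   given by the list of vertices after u *)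
Definition dpath N (E : {set 'I_N * 'I_N}) (u v : 'I_N) (p : seq 'I_N) : Prop :=
  [/\ path (fun x y => (x, y) \in E) u p, last u p = v & uniq (u :: p)].

Definition undir N (T : subgraph N) : rel 'I_N :=
  fun x y => ((x, y) \in se T) || ((y, x) \in se T).

Definition pseudotree N (T : subgraph N) : Prop :=
  [/\ (forall x, x \in se T -> (x.1 \in sv T) && (x.2 \in sv T)),
      (forall x, x \in se T -> x.1 != x.2),
      2 <= #|sv T|,
      (forall u v, u \in sv T -> v \in sv T -> connect (undir T) u v)
    & (forall v, v \in sv T -> #|[set u | (u, v) \in se T]| <= 1)].

Definition is_root N (T : subgraph N) (r : 'I_N) : Prop :=
  r \in sv T /\
  forall v, v \in sv T -> v != r -> exists! p, dpath (se T) r v p.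

Definition disjoint_pt N (T1 T2 : subgraph N) : Prop :=
  [disjoint se T1 & se T2] /\
  forall j, j \in sv T1 :|: sv T2 ->
    (forall u, (j, u) \in se T1 :|: se T2 -> (j, u) \in se T1) \/
    (forall u, (j, u) \in se T1 :|: se T2 -> (j, u) \in se T2).

Definition union_sg N (T1 T2 : subgraph N) : subgraph N :=
  Subgraph (sv T1 :|: sv T2) (se T1 :|: se T2).

Definition mergeable N (T1 T2 : subgraph N) : Prop :=
  [/\ pseudotree T1 /\ pseudotree T2, disjoint_pt T1 T2,
      sv T1 :&: sv T2 != set0,
      pseudotree (union_sg T1 T2)
    & forall r, is_root T2 r -> forall v, v \in sv T1 ->
        exists p, dpath (se T1 :|: se T2) r v p].

Inductive charval := CVone | CVzero | CVempty.

Definition char_entry N (Ti Tj : subgraph N) : charval :=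
  if excluded_middle_informative (mergeable Ti Tj) then CVone
  else if [disjoint sv Tj & sv Ti] then CVempty else CVzero.

Definition star0 N (e : rel 'I_N) (k : 'I_N) : subgraph N :=
  Subgraph (k |: [set u | e k u]) [set x | (x.1 == k) && e k x.2].

(* characteristic matrix of Pi_0 (indexed by the non-sink vertices) *)
Definition charM0 N (e : rel 'I_N) (i j : 'I_N) : charval :=
  char_entry (star0 e i) (star0 e j).

Local Open Scope ring_scope.
Definition adjmx N (e : rel 'I_N) : 'M[algC]_N := \matrix_(i, j) ((e j i)%:R).

Definition aval N (e : rel 'I_N) (i j : 'I_N) : algC :=
  let B := adjmx e + ('i)%:M in ((col i B)^T *m col j B) 0 0.

From Stdlib Require Import ClassicalEpsilon.
From mathcomp Require Import all_boot all_order all_algebra all_field.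
From mathcomp Require Import ring zify.
Import GRing.Theory Num.Theory.

(* For distinct non-sinks i and j, expanding the product of the columns of A + iI gives
   a_ij = #(common out-neighbours of i and j) + i ([i -> j] + [j -> i]).
   Mergeability of the stars is read off the same data: j is the only root of T_j, so
   T_i is reachable from it only through the edge j -> i, and a common out-neighbour
   would have in-degree two in the union; conversely, these two conditions make the
   union a pseudotree in which j reaches every vertex of T_i.  The vertex sets of T_i
   and T_j are disjoint exactly when there is no edge between i and j and no common
   out-neighbour, i.e. when a_ij = 0.  Indices below N - #sinks are not sinks because
   the sinks come last. *)

Set Implicit Arguments.
Unset Strict Implicit.
Unset Printing Implicit Defensive.

Lemma char_entry_mergeable N (Ti Tj : subgraph N) :
  mergeable Ti Tj -> char_entry Ti Tj = CVone.
Proof. by rewrite /char_entry; case: excluded_middle_informative. Qed.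

Lemma char_entry_disjoint N (Ti Tj : subgraph N) :
  [disjoint sv Tj & sv Ti] -> char_entry Ti Tj = CVempty.
Proof.
move=> dji; rewrite /char_entry dji.
case: excluded_middle_informative => // m.
by have [_ _ + _ _] := m; rewrite setI_eq0 disjoint_sym dji.
Qed.

Lemma char_entry_meet N (Ti Tj : subgraph N) :
  ~ mergeable Ti Tj -> ~~ [disjoint sv Tj & sv Ti] -> char_entry Ti Tj = CVzero.
Proof.
by move=> nm /negbTE dji; rewrite /char_entry dji; case: excluded_middle_informative.
Qed.

Lemma pseudotree_union N (T1 T2 : subgraph N) :
  pseudotree T1 -> pseudotree T2 -> sv T1 :&: sv T2 != set0 ->
  (forall v, #|[set u | (u, v) \in se T1 :|: se T2]| <= 1) ->
  pseudotree (union_sg T1 T2).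
Proof.
move=> [ends1 loop1 card1 conn1 _] [ends2 loop2 _ conn2 _] /set0Pn[c /setIP[c1 c2]].
move=> indeg; set U := union_sg T1 T2.
have lift (T : subgraph N) : se T \subset se U ->
    subrel (connect (undir T)) (connect (undir U)).
  move=> /subsetP sub; apply: connect_sub => x y /orP xy; apply: connect1.
  by rewrite /undir; case: xy => /sub ->; rewrite ?orbT.
have lift1 := lift T1 (subsetUl _ _); have lift2 := lift T2 (subsetUr _ _).
split => //=.
- by move=> x /setUP[/ends1 | /ends2] /andP[x1 x2]; rewrite !in_setU x1 x2 ?orbT.
- by move=> x /setUP[/loop1 | /loop2].
- exact: leq_trans card1 (subset_leq_card (subsetUl _ _)).
- move=> a b; rewrite !inE => Ha Hb; apply: (@connect_trans _ _ c).
  + case/orP: Ha => Ha; first exact: lift1 (conn1 _ _ Ha c1).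
    exact: lift2 (conn2 _ _ Ha c2).
  + case/orP: Hb => Hb; first exact: lift1 (conn1 _ _ c1 Hb).
    exact: lift2 (conn2 _ _ c2 Hb).
Qed.

Section Stars.

Variables (N : nat) (e : rel 'I_N).
Local Notation T := (star0 e).
Local Notation out k := [set u | e k u].

Lemma nonsinkP k : reflect (exists u, e k u) (~~ sink e k).
Proof.
rewrite /sink negb_forall.
by apply: (iffP existsP) => -[u eku]; exists u; rewrite ?negbK in eku *.
Qed.

Lemma star0_dpath k v p : dpath (se (T k)) k v p -> v != k -> p = [:: v].
Proof.
case: p => [|x [|y p]] [] /=.
- by move=> _ <-; rewrite eqxx.
- by move=> _ ->.
- by rewrite !inE /= => /and3P[_ /andP[/eqP-> _] _] _; rewrite eqxx.
Qed.

Lemma star0_root k r : is_root (T k) r <-> r = k.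
Proof.
split=> [[_ reach] | ->].
  apply/eqP; apply: contraT; rewrite eq_sym => kr.
  have [[|x p] [[/= Hp Hl _] _]] := reach k (setU11 _ _) kr.
    by rewrite Hl eqxx in kr.
  by move: Hp; rewrite !inE /= eq_sym (negbTE kr).
split=> [|v]; first exact: setU11.
rewrite !inE => /orP[/eqP-> | ekv]; first by rewrite eqxx.
move=> vk; exists [:: v]; split=> [|p /star0_dpath -> //].
split=> //=; first by rewrite in_set /= eqxx ekv.
by rewrite inE andbT eq_sym.
Qed.

Lemma star0_sv_disjoint i j : i != j ->
  [disjoint sv (T j) & sv (T i)] = [&& ~~ e i j, ~~ e j i & [disjoint out i & out j]].
Proof.
move=> ij; rewrite !disjoints_subset /=.
apply/subsetP/and3P => [sub | [nij nji /subsetP sub] x].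
  have meet x : e j x -> e i x -> False.
    by move=> ejx eix; have := sub x; rewrite !inE ejx eix !orbT => /(_ isT).
  split.
  - by apply/negP => eij; have := sub j; rewrite !inE eqxx eij orbT => /(_ isT).
  - by apply/negP => eji; have := sub i; rewrite !inE eqxx eji orbT => /(_ isT).
  - by apply/subsetP => x; rewrite !inE => eix; apply/negP => /meet.
rewrite !inE negb_or => /orP[/eqP-> | ejx]; apply/andP; split.
- by rewrite eq_sym.
- exact: nij.
- by apply: contraTneq ejx => ->.
- by move: (sub x); rewrite !inE => /contraL; apply.
Qed.

Lemma star0_disjoint_pt i j : i != j -> disjoint_pt (T i) (T j).
Proof.
move=> ij; split.
  rewrite -setI_eq0; apply/eqP/setP => -[a b]; rewrite !in_set /=.
  by apply/negbTE; apply: contra ij => /andP[/andP[/eqP<- _] /andP[/eqP<- _]].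
move=> k _; have [-> | ki] := eqVneq k i.
  by left=> u /setUP[// | ]; rewrite in_set /= (negbTE ij).
by right=> u /setUP[ | //]; rewrite in_set /= (negbTE ki).
Qed.

Lemma star0_not_mergeable_self i : ~~ sink e i -> ~ mergeable (T i) (T i).
Proof.
move=> /nonsinkP[u eiu] [_ [dE _] _ _ _].
have iu : (i, u) \in se (T i) by rewrite in_set /= eqxx eiu.
by have := disjointFr dE iu; rewrite iu.
Qed.

Hypothesis e_irr : irreflexive e.

Lemma edge_neq u v : e u v -> u != v.
Proof. by apply: contraTneq => ->; rewrite e_irr. Qed.

Lemma star0_pseudotree k : ~~ sink e k -> pseudotree (T k).
Proof.
move=> /nonsinkP[u eku]; split.
- by move=> [a b]; rewrite in_set /= => /andP[/eqP-> ekb]; rewrite !inE eqxx ekb orbT.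
- by move=> [a b]; rewrite in_set /= => /andP[/eqP-> /edge_neq].
- have kuT : [set k; u] \subset sv (T k).
    by apply/subsetP => x; rewrite !inE => /orP[] /eqP->; rewrite ?eqxx ?eku ?orbT.
  by rewrite (leq_trans _ (subset_leq_card kuT)) ?cards2 ?edge_neq.
- have sym : connect_sym (undir (T k)).
    by apply: sym_connect_sym => x y; rewrite /undir orbC.
  have hub a : a \in sv (T k) -> connect (undir (T k)) k a.
    rewrite !inE => /orP[/eqP-> | eka]; first exact: connect0.
    by apply: connect1; rewrite /undir in_set /= eqxx eka.
  by move=> a b /hub ka /hub kb; rewrite sym in ka; apply: connect_trans ka kb.
- move=> v _; rewrite (leq_trans (subset_leq_card (_ : _ \subset [set k]))) ?cards1 //.
  by apply/subsetP => x; rewrite !inE => /andP[].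
Qed.

Lemma star0_mergeable_edge i j : i != j -> mergeable (T i) (T j) -> e j i.
Proof.
move=> ij [_ _ _ _ reach].
have [[|x p] [Hp Hl Hu]] :=
  reach j (proj2 (star0_root j j) erefl) i (setU11 _ _).
  by rewrite -Hl eqxx in ij.
move: Hp Hu => /= /andP[+ Hp] /andP[jp _].
rewrite in_setU !in_set /= eqxx eq_sym (negbTE ij) /= => ejx.
case: p Hl Hp jp => [/= <- // | y p _ /= /andP[+ _] jp].
rewrite in_setU !in_set /= => /orP[] /andP[/eqP xk _].
- by rewrite -xk.
- by rewrite xk inE eqxx in jp.
Qed.

Lemma star0_mergeable_disjoint i j :
  i != j -> mergeable (T i) (T j) -> [disjoint out i & out j].
Proof.
move=> ij [_ _ _ [_ _ _ _ indeg] _].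
rewrite disjoints_subset; apply/subsetP => u; rewrite !inE => eiu.
apply/negP => eju.
have := indeg u; rewrite !inE eiu orbT => /(_ isT); rewrite leqNgt => /negP; apply.
rewrite (leq_trans _ (subset_leq_card (_ : [set i; j] \subset _))) ?cards2 ?ij //.
apply/subsetP => x; rewrite !inE => /orP[] /eqP->.
all: by rewrite /= eqxx ?eiu ?eju ?orbT.
Qed.

Lemma star0_merge i j : ~~ sink e i -> ~~ sink e j -> i != j ->
  e j i -> [disjoint out i & out j] -> mergeable (T i) (T j).
Proof.
move=> si sj ij eji dij.
have meet : sv (T i) :&: sv (T j) != set0.
  by apply/set0Pn; exists i; rewrite !inE eqxx eji orbT.
split=> //.
- by split; apply: star0_pseudotree.
- exact: star0_disjoint_pt.
- apply: pseudotree_union => //; try exact: star0_pseudotree.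
  have nc v : e i v -> ~~ e j v.
    by move=> eiv; have := disjointFr dij (x := v); rewrite !inE => /(_ eiv) ->.
  move=> v; set w := if e i v then i else j.
  rewrite (leq_trans (subset_leq_card (_ : _ \subset [set w]))) ?cards1 //.
  apply/subsetP => u; rewrite !inE /= => /orP[] /andP[/eqP-> ev].
    by rewrite /w ev.
  by rewrite /w; case: ifP => // /nc; rewrite ev.
- move=> r /star0_root -> v; rewrite !inE => /orP[/eqP-> | eiv].
    by exists [:: i]; split; rewrite /= ?inE /= ?eqxx ?eji ?orbT ?andbT // eq_sym.
  have [-> | vj] := eqVneq v j; first by exists [::].
  exists [:: i; v]; split; rewrite /= ?inE /= ?eqxx ?eji ?eiv ?orbT ?andbT //.
  by rewrite negb_or eq_sym ij eq_sym vj edge_neq.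
Qed.

Lemma star0_mergeableP i j : ~~ sink e i -> ~~ sink e j -> i != j ->
  mergeable (T i) (T j) <-> e j i && [disjoint out i & out j].
Proof.
move=> si sj ij; split=> [m | /andP[eji dij]]; last exact: star0_merge.
by rewrite (star0_mergeable_edge ij m) (star0_mergeable_disjoint ij m).
Qed.

Lemma charM0_diag i : ~~ sink e i -> charM0 e i i = CVzero.
Proof.
move=> si; apply: char_entry_meet; first exact: star0_not_mergeable_self.
by rewrite -setI_eq0 setIid; apply/set0Pn; exists i; apply: setU11.
Qed.

Lemma charM0_offdiag i j : ~~ sink e i -> ~~ sink e j -> i != j ->
  charM0 e i j =
    if e j i && [disjoint out i & out j] then CVone
    else if [&& ~~ e i j, ~~ e j i & [disjoint out i & out j]] then CVempty
    else CVzero.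
Proof.
move=> si sj ij; have mergeP := star0_mergeableP si sj ij.
rewrite /charM0 -star0_sv_disjoint //.
case: ifP => [/mergeP | nm]; first exact: char_entry_mergeable.
case: ifP => [| /negbT]; first exact: char_entry_disjoint.
by apply: char_entry_meet => /mergeP; rewrite nm.
Qed.

End Stars.

Lemma leq_sub_card_upclosed N (P : pred 'I_N) (i : 'I_N) :
  (forall k l : 'I_N, k <= l -> P k -> P l) -> P i -> N - #|[set k | P k]| <= i.
Proof.
move=> upP Pi; have iN : i <= N := ltnW (ltn_ord i).
have below : ~: [set k | P k] \subset widen_ord iN @: 'I_i.
  apply/subsetP => k; rewrite !inE => nPk.
  have ki : k < i by rewrite ltnNge; apply: contra nPk => /upP; apply.
  by apply/imsetP; exists (Ordinal ki) => //; apply: val_inj.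
have := leq_trans (subset_leq_card below) (leq_imset_card _ _).
by have := cardsC [set k | P k]; rewrite !card_ord; lia.
Qed.

Section AdjacencyGram.

Variables (N : nat) (e : rel 'I_N).
Local Notation out k := [set u | e k u].
Local Open Scope ring_scope.

Lemma aval_offdiag i j : i != j ->
  aval e i j = #|out i :&: out j|%:R + 'i * (e i j + e j i)%N%:R.
Proof.
move=> ij; rewrite /aval !mxE.
have entry l : (col i (adjmx e + 'i%:M))^T 0 l * col j (adjmx e + 'i%:M) l 0 =
    (e i l && e j l)%:R + 'i * (((l == j) && e i l)%:R + ((l == i) && e j l)%:R).
  rewrite !mxE; have : ~~ ((l == i) && (l == j)).
    by apply: contra ij => /andP[/eqP<- /eqP<-].
  by case: (l == i) (l == j) (e i l) (e j l) => [] [] [] [] //= _; ring.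
have point k (f : 'I_N -> bool) : \sum_l (((l == k) && f l)%:R : algC) = (f k)%:R.
  by rewrite (bigD1 k) //= eqxx big1 ?addr0 // => l /negbTE->.
have common : \sum_l ((e i l && e j l)%:R : algC) = #|out i :&: out j|%:R.
  rewrite -sum1_card natr_sum [RHS]big_mkcond; apply: eq_bigr => l _.
  by rewrite !inE; case: (_ && _).
by rewrite (eq_bigr _ (fun l _ => entry l)) big_split /= -mulr_sumr big_split /=
  !point common natrD.
Qed.

Lemma Re_aval_eq0 i j : i != j -> ('Re (aval e i j) == 0) = [disjoint out i & out j].
Proof.
by move=> ij; rewrite aval_offdiag // Re_rect ?realn // pnatr_eq0 cards_eq0 setI_eq0.
Qed.

Lemma Im_aval_eq0 i j : i != j -> ('Im (aval e i j) == 0) = ~~ e i j && ~~ e j i.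
Proof.
by move=> ij; rewrite aval_offdiag // Im_rect ?realn // pnatr_eq0 addn_eq0 !eqb0.
Qed.

Lemma adjmx_eq0 i j : (adjmx e i j == 0) = ~~ e j i.
Proof. by rewrite mxE pnatr_eq0 eqb0. Qed.

End AdjacencyGram.

Local Open Scope ring_scope.

Theorem lemma5 (N : nat) (e : rel 'I_N)
  (Hsimple : irreflexive e)
  (Hsinks_last : forall k l : 'I_N, (k <= l)%N -> sink e k -> sink e l) :
  forall i j : 'I_N,
    (i < N - #|[set k | sink e k]|)%N -> (j < N - #|[set k | sink e k]|)%N ->
    (i = j -> charM0 e i j = CVzero) /\
    (i <> j ->
      [/\ ('Re (aval e i j) = 0 /\ 'Im (aval e i j) != 0 /\ adjmx e i j != 0 ->
             charM0 e i j = CVone),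
          ('Re (aval e i j) != 0 \/
             ('Re (aval e i j) = 0 /\ 'Im (aval e i j) != 0 /\ adjmx e i j = 0) ->
             charM0 e i j = CVzero)
        & (aval e i j = 0 -> charM0 e i j = CVempty)]).
Proof.
move=> i j Hi Hj.
have nonsink (k : 'I_N) : (k < N - #|[set k | sink e k]|)%N -> ~~ sink e k.
  move=> Hk; apply: contraTN Hk => /(leq_sub_card_upclosed Hsinks_last).
  by rewrite -leqNgt.
have [si sj] := (nonsink i Hi, nonsink j Hj).
split=> [<- | /eqP ij]; first exact: charM0_diag.
rewrite charM0_offdiag //.
have ReE := Re_aval_eq0 e ij; have ImE := Im_aval_eq0 e ij; have AE := adjmx_eq0 e i j.
split=> [[/eqP + [_ +]] | [+ | [/eqP + [+ /eqP +]]] | a0].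
- by rewrite ReE AE negbK => -> ->.
- by rewrite ReE => /negbTE->; rewrite !andbF.
- rewrite ReE ImE AE => -> + /negbTE nji.
  by rewrite nji /= andbT negbK => ->.
- move: ReE ImE; rewrite a0 !raddf0 eqxx => <- /esym/andP[nij nji].
  by rewrite (negbTE nij) (negbTE nji).
Qed.
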